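(* Let $\mathcal{M}$ be a nonempty bounded convex subset of a normed space $\mathcal{E}$ and let $T\colon\mathcal{M}\to\mathcal{M}$ be a $\lambda$-contraction (i.e. $\|Tx-Ty\|\le\lambda\|x-y\|$ for all $x,y\in\mathcal{M}$) with $\lambda\in(0,1)$. Then there exists a sequence $(x_n)_{n\in\mathbb{N}}$ in $\mathcal{M}$ such that for all $n,m\in\mathbb{N}$, $$\|x_n-T(x_n)\|<\frac{1-\lambda}{n}(1+\operatorname{diam}\mathcal{M})\quad\text{and}\quad\|x_n-x_m\|\le\Big(\frac1n+\frac1m\Big)(1+\operatorname{diam}\mathcal{M}).$$ *)

From HB Require Import structures.
From mathcomp Require Import all_boot all_order all_algebra.
From mathcomp Require Import all_classical all_reals all_analysis.
Set Implicit Arguments. Unset Strict Implicit. Unset Printing Implicit Defensive.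
Import Order.TTheory GRing.Theory Num.Theory.
Import numFieldNormedType.Exports.
Local Open Scope classical_set_scope.
Local Open Scope ring_scope.

Definition diam (R : realType) (E : normedModType R) (A : set E) : R :=
  sup [set `|x - y| | x in A & y in A].

From HB Require Import structures.
From mathcomp Require Import all_boot all_order all_algebra.
From mathcomp Require Import all_classical all_reals all_analysis.
Set Implicit Arguments. Unset Strict Implicit. Unset Printing Implicit Defensive.
Import Order.TTheory GRing.Theory Num.Theory.
Import numFieldNormedType.Exports.
Local Open Scope classical_set_scope.
Local Open Scope ring_scope.

(* The Picard iterates y_k = T^k x0 of any point satisfy
   |y_k - y_l| <= lambda^(min k l) diam M, because T^k is lambda^k-Lipschitz
   and y_l = T^k y_(l-k) for k <= l.  Taking x_n := y_(k_n) with
   lambda^(k_n) < (1 - lambda)/n gives both estimates: |x_n - T x_n| is the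
   distance between two consecutive iterates, and
   lambda^(min k_n k_m) <= lambda^(k_n) + lambda^(k_m). *)

Lemma exists_expr_lt (R : realType) (lambda eps : R) :
  0 <= lambda < 1 -> 0 < eps -> exists k : nat, lambda ^+ k < eps.
Proof.
move=> /andP[l0 l1] eps_gt0.
have lambda_k0 : (GRing.exp lambda : R^o^nat) @ \oo --> 0.
  by apply: cvg_expr; rewrite ger0_norm.
have [N _ ltN] := cvgr_lt _ lambda_k0 _ eps_gt0.
by exists N; apply: (ltN N) => /=.
Qed.

Lemma expr_minn_le (R : numDomainType) (lambda : R) (k l : nat) :
  0 <= lambda -> lambda ^+ minn k l <= lambda ^+ k + lambda ^+ l.
Proof.
by move=> l0; case: leqP => _; rewrite ?lerDl ?lerDr exprn_ge0.
Qed.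

Lemma dist_le_diam (R : realType) (E : normedModType R) (A : set E) (a b : E) :
  bounded_set A -> A a -> A b -> `|a - b| <= diam A.
Proof.
case=> r [_ /(_ (r + 1))] Ar Aa Ab.
have {}Ar : forall x, A x -> `|x| <= r + 1 by apply: Ar; rewrite ltrDl.
apply: sup_upper_bound; last by exists a => //; exists b.
split; first by exists `|a - a|; exists a => //; exists a.
exists ((r + 1) + (r + 1)) => _ [x Ax [y Ay <-]].
by rewrite (le_trans (ler_normB _ _))// lerD// Ar.
Qed.

Section PicardIterates.
Variables (R : realType) (E : normedModType R) (M : set E).
Variables (T : E -> E) (lambda : R).
Hypothesis M_bounded : bounded_set M.
Hypothesis T_maps_M : forall x, M x -> M (T x).
Hypothesis lambda_ge0 : 0 <= lambda.
Hypothesis T_lipschitz :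
  forall x y, M x -> M y -> `|T x - T y| <= lambda * `|x - y|.

Lemma iter_in (k : nat) (a : E) : M a -> M (iter k T a).
Proof. by elim: k => [//|k IH] Ma; apply/T_maps_M/IH. Qed.

Lemma iter_lipschitz (k : nat) (a b : E) : M a -> M b ->
  `|iter k T a - iter k T b| <= lambda ^+ k * `|a - b|.
Proof.
elim: k => [|k IH] Ma Mb /=; first by rewrite expr0 mul1r.
rewrite (le_trans (T_lipschitz (iter_in k Ma) (iter_in k Mb)))//.
by rewrite exprS -mulrA ler_wpM2l// IH.
Qed.

Lemma dist_iter_le (k l : nat) (a : E) : M a ->
  `|iter k T a - iter l T a| <= lambda ^+ minn k l * diam M.
Proof.
wlog kl : k l / (k <= l)%N => [wlog_kl|] Ma.
  have /orP[kl|lk] := leq_total k l; first exact: wlog_kl.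
  by rewrite minnC distrC; apply: wlog_kl.
rewrite (minn_idPl kl) -(subnK kl) addnC iterD.
rewrite (le_trans (iter_lipschitz k Ma (iter_in _ Ma)))//.
rewrite ler_wpM2l ?exprn_ge0//; exact: dist_le_diam M_bounded Ma (iter_in _ Ma).
Qed.

End PicardIterates.

Theorem lemma3p4 (R : realType) (E : normedModType R) (M : set E)
  (T : E -> E) (lambda : R) :
  M !=set0 -> bounded_set M -> convex_set (M : set (convex_lmodType E)) ->
  (forall x, M x -> M (T x)) ->
  0 < lambda < 1 ->
  (forall x y, M x -> M y -> `|T x - T y| <= lambda * `|x - y|) ->
  exists u : nat -> E,
    (forall n, M (u n)) /\
    (forall n m : nat, (0 < n)%N -> (0 < m)%N ->
       `|u n - T (u n)| < (1 - lambda) / n%:R * (1 + diam M) /\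
       `|u n - u m| <= (n%:R^-1 + m%:R^-1) * (1 + diam M)).
Proof.
move=> [x0 Mx0] Mb _ MT /andP[l0 l1] HT.
have l0' := ltW l0; have lam : 0 <= lambda < 1 by rewrite l0'.
have dist_iterates := dist_iter_le Mb MT l0' HT.
pose eps (n : nat) : R := (1 - lambda) / n%:R.
have eps_gt0 n : (0 < n)%N -> 0 < eps n.
  by move=> n0; rewrite divr_gt0 ?subr_gt0 ?ltr0n.
have /choice[k ltk] : forall n, exists k, (0 < n)%N -> lambda ^+ k < eps n.
  move=> [|n]; first by exists 0%N.
  by have [k ?] := exists_expr_lt lam (eps_gt0 n.+1 isT); exists k.
have eps_le n : eps n <= n%:R^-1 by rewrite ler_piMl ?invr_ge0 ?gerBl.
have diam_ge0 : 0 <= diam M := le_trans (normr_ge0 _) (dist_le_diam Mb Mx0 Mx0).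
have D_gt0 : 0 < 1 + diam M by rewrite ltr_pwDl.
exists (fun n => iter (k n) T x0); split=> [n|n m n0 m0]; first exact: iter_in.
split.
  rewrite -iterS (le_lt_trans (dist_iterates _ _ _ Mx0))//.
  rewrite (minn_idPl (leqnSn _)).
  apply: (@le_lt_trans _ _ (lambda ^+ k n * (1 + diam M))).
  - by rewrite ler_wpM2l ?exprn_ge0 ?lerDr.
  - by rewrite ltr_pM2r ?ltk.
rewrite (le_trans (dist_iterates _ _ _ Mx0))//.
apply: ler_pM.
- by rewrite exprn_ge0.
- exact: diam_ge0.
- apply: le_trans (expr_minn_le _ _ l0') _; apply: lerD; apply: ltW.
    exact: lt_le_trans (ltk n n0) (eps_le n).
  exact: lt_le_trans (ltk m m0) (eps_le m).
- by rewrite lerDr.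
Qed.
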